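(* Let $m>1$ be an integer and $0<\gamma<\frac12$. Then $\delta\mapsto F(m,\gamma,\delta)$ is non-increasing on $[0,1]$.
   Context: Logarithms base 2; $h$ is binary entropy; $\|u\|$ is Hamming weight. For an integer $m\ge1$, $\gamma\in(0,\frac12)$ and $\delta\in[0,1]$, let $H^*(m,\gamma,\delta)$ be the maximum entropy of a probability distribution $Q$ on $\mathbb{F}_2^m$ satisfying $\Pr_{u\sim Q}(u_i=1)=\gamma$ for all $1\le i\le m$ and $\Pr_{u\sim Q}(\|u\|\text{ odd})=\delta$; set $F(m,\gamma,\delta)=H^*(m,\gamma,\delta)-h(\delta)$ if such $Q$ exists and $F(m,\gamma,\delta)=-\infty$ otherwise. *)

From Stdlib Require Import Reals List Arith Classical ClassicalEpsilon.
Import ListNotations.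
Open Scope R_scope.

(* F_2^m represented as the list of all boolean lists of length m. *)
Fixpoint cube (m : nat) : list (list bool) :=
  match m with
  | O => [nil]
  | S k => map (cons false) (cube k) ++ map (cons true) (cube k)
  end.

Definition sumL (f : list bool -> R) (l : list (list bool)) : R :=
  fold_right (fun u acc => f u + acc) 0 l.

Definition weight (u : list bool) : nat := length (filter (fun b => b) u).

Definition log2 (x : R) : R := ln x / ln 2.

(* x log2 x, with 0 log 0 = 0 automatically since 0 * _ = 0 *)
Definition plogp (x : R) : R := x * log2 x.

Definition ent (m : nat) (Q : list bool -> R) : R :=
  - sumL (fun u => plogp (Q u)) (cube m).

Definition h (d : R) : R := - plogp d - plogp (1 - d).

(* Q (values on cube m) is a probability distribution on F_2^m with
   Pr(u_i = 1) = gamma for all 1 <= i <= m (0-based index i < m here)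
   and Pr(||u|| odd) = delta. *)
Definition feasible (m : nat) (gamma delta : R) (Q : list bool -> R) : Prop :=
  (forall u, In u (cube m) -> 0 <= Q u) /\
  sumL Q (cube m) = 1 /\
  (forall i : nat, (i < m)%nat ->
     sumL (fun u => if nth i u false then Q u else 0) (cube m) = gamma) /\
  sumL (fun u => if Nat.odd (weight u) then Q u else 0) (cube m) = delta.

Definition entropies (m : nat) (gamma delta : R) : R -> Prop :=
  fun x => exists Q, feasible m gamma delta Q /\ x = ent m Q.

(* H*(m,gamma,delta): the supremum (= maximum, by compactness) of the
   entropies of feasible distributions. *)
Definition Hstar (m : nat) (gamma delta : R) : R :=
  epsilon (inhabits 0) (fun H => is_lub (entropies m gamma delta) H).

Inductive ER : Type := Fin (r : R) | NegInf.

Definition ER_le (a b : ER) : Prop :=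
  match a, b with
  | NegInf, _ => True
  | Fin _, NegInf => False
  | Fin x, Fin y => x <= y
  end.

Definition F (m : nat) (gamma delta : R) : ER :=
  if excluded_middle_informative (exists Q, feasible m gamma delta Q)
  then Fin (Hstar m gamma delta - h delta)
  else NegInf.

From Stdlib Require Import Reals List Arith Classical ClassicalEpsilon Lra Lia.
Import ListNotations.
Open Scope R_scope.

(* For t in (0,1] let P_t be the tilted distribution P_t(u) = c_(parity u) t^|u|, whose parity
   classes carry masses d and 1 - d.  Gibbs' inequality against P_t bounds the entropy of every
   feasible Q with odd mass d by a cross entropy which, minus h(d), is affine in d with slope
   ln O(t) - ln E(t) <= 0, where E and O are the even and odd parts of (1+t)^m.  For d1 < d2 the
   intermediate value theorem gives a t for which P_t itself is feasible with odd mass d1, so the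
   bound is attained there:  H*(d2) - h(d2) <= bound(d2) - h(d2) <= bound(d1) - h(d1)
   = ent(P_t) - h(d1) <= H*(d1) - h(d1).  Feasibility at d2 forces d2 <= m gamma (odd weights are
   at least 1), which makes such a t exist; m > 1 and gamma < 1/2 are needed at t = 1. *)

Section SumL.
Implicit Types (f g : list bool -> R) (l : list (list bool)).

Lemma sumL_nil f : sumL f [] = 0.
Proof. reflexivity. Qed.

Lemma sumL_cons f a l : sumL f (a :: l) = f a + sumL f l.
Proof. reflexivity. Qed.

Lemma sumL_app f l1 l2 : sumL f (l1 ++ l2) = sumL f l1 + sumL f l2.
Proof.
  induction l1 as [|a l1 IH]; simpl app; rewrite ?sumL_nil, ?sumL_cons, ?IH; ring.
Qed.

Lemma sumL_ext f g l : (forall u, In u l -> f u = g u) -> sumL f l = sumL g l.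
Proof.
  induction l as [|a l IH]; intros Hfg; [reflexivity|].
  rewrite !sumL_cons, (Hfg a (in_eq a l)), IH; [reflexivity|].
  intros u Hu. apply Hfg, in_cons, Hu.
Qed.

Lemma sumL_lin a b f g l :
  sumL (fun u => a * f u + b * g u) l = a * sumL f l + b * sumL g l.
Proof. induction l as [|u l IH]; rewrite ?sumL_nil, ?sumL_cons, ?IH; ring. Qed.

Lemma sumL_scal a f l : sumL (fun u => a * f u) l = a * sumL f l.
Proof. induction l as [|u l IH]; rewrite ?sumL_nil, ?sumL_cons, ?IH; ring. Qed.

Lemma sumL_plus f g l : sumL (fun u => f u + g u) l = sumL f l + sumL g l.
Proof. induction l as [|u l IH]; rewrite ?sumL_nil, ?sumL_cons, ?IH; ring. Qed.

Lemma sumL_0 l : sumL (fun _ => 0) l = 0.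
Proof. induction l as [|u l IH]; rewrite ?sumL_nil, ?sumL_cons, ?IH; ring. Qed.

Lemma sumL_le f g l : (forall u, In u l -> f u <= g u) -> sumL f l <= sumL g l.
Proof.
  induction l as [|a l IH]; intros Hfg; rewrite ?sumL_nil, ?sumL_cons; [lra|].
  apply Rplus_le_compat; [apply Hfg | apply IH; intros; apply Hfg]; simpl; auto.
Qed.

Lemma sumL_nonneg f l : (forall u, In u l -> 0 <= f u) -> 0 <= sumL f l.
Proof. intros Hf. rewrite <- (sumL_0 l). now apply sumL_le. Qed.

Lemma sumL_nonneg_eq0 f l : (forall u, In u l -> 0 <= f u) -> sumL f l = 0 ->
  forall u, In u l -> f u = 0.
Proof.
  induction l as [|a l IH]; intros Hf Hs u Hu; [destruct Hu|].
  rewrite sumL_cons in Hs.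
  assert (0 <= f a) by (apply Hf; now left).
  assert (0 <= sumL f l) by (apply sumL_nonneg; intros; apply Hf; now right).
  destruct Hu as [<-|Hu]; [lra|].
  apply IH; auto; [intros; apply Hf; now right | lra].
Qed.

End SumL.

Lemma sumL_cube_S f n : sumL f (cube (S n)) =
  sumL (fun u => f (false :: u)) (cube n) + sumL (fun u => f (true :: u)) (cube n).
Proof.
  simpl cube. rewrite sumL_app.
  f_equal; generalize (cube n); induction l as [|a l IH]; simpl map;
    rewrite ?sumL_nil, ?sumL_cons, ?IH; reflexivity.
Qed.

Lemma length_cube n u : In u (cube n) -> length u = n.
Proof.
  revert u; induction n as [|n IH]; simpl; intros u Hu.
  - now destruct Hu as [<-|[]].
  - apply in_app_or in Hu.
    destruct Hu as [Hu|Hu]; apply in_map_iff in Hu; destruct Hu as [v [<- Hv]];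
      simpl; f_equal; auto.
Qed.

Fixpoint sum_upto (g : nat -> R) (n : nat) : R :=
  match n with
  | O => 0
  | S k => sum_upto g k + g k
  end.

Lemma sum_upto_shift g n : sum_upto g (S n) = g O + sum_upto (fun i => g (S i)) n.
Proof. induction n as [|n IH]; simpl in *; [ring|]. rewrite IH. ring. Qed.

Lemma sum_upto_ext g1 g2 n : (forall i, (i < n)%nat -> g1 i = g2 i) ->
  sum_upto g1 n = sum_upto g2 n.
Proof.
  induction n as [|n IH]; intros Hg; simpl; [reflexivity|].
  rewrite Hg, IH; [reflexivity | intros; apply Hg |]; lia.
Qed.

Lemma sum_upto_const c n : sum_upto (fun _ => c) n = INR n * c.
Proof. induction n as [|n IH]; simpl sum_upto; [simpl; ring|]. rewrite IH, S_INR. ring. Qed.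

Lemma sum_upto_scal c g n : c * sum_upto g n = sum_upto (fun i => c * g i) n.
Proof. induction n as [|n IH]; simpl; [ring|]. rewrite <- IH. ring. Qed.

Lemma weight_sum_upto u :
  INR (weight u) = sum_upto (fun i => if nth i u false then 1 else 0) (length u).
Proof.
  induction u as [|b u IH]; [reflexivity|].
  simpl length. rewrite sum_upto_shift. simpl nth. rewrite <- IH.
  destruct b.
  - change (weight (true :: u)) with (S (weight u)). rewrite S_INR. ring.
  - change (weight (false :: u)) with (weight u). ring.
Qed.

Lemma sumL_sum_upto (g : list bool -> nat -> R) n l :
  sumL (fun u => sum_upto (g u) n) l = sum_upto (fun i => sumL (fun u => g u i) l) n.
Proof.
  induction n as [|n IH]; simpl sum_upto; [apply sumL_0|].
  rewrite sumL_plus, IH. reflexivity.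
Qed.

Section Feasible.
Variables (m : nat) (gamma d : R) (Q : list bool -> R).
Hypothesis HQ : feasible m gamma d Q.

Lemma feasible_mean_weight : sumL (fun u => Q u * INR (weight u)) (cube m) = INR m * gamma.
Proof.
  destruct HQ as (_ & _ & Hmarg & _).
  rewrite (sumL_ext _ (fun u => sum_upto (fun i => if nth i u false then Q u else 0) m)).
  - rewrite sumL_sum_upto, <- sum_upto_const. apply sum_upto_ext. exact Hmarg.
  - intros u Hu. rewrite weight_sum_upto, (length_cube m u Hu), sum_upto_scal.
    apply sum_upto_ext. intros i _. destruct (nth i u false); ring.
Qed.

Lemma feasible_even_mass :
  sumL (fun u => if Nat.odd (weight u) then 0 else Q u) (cube m) = 1 - d.
Proof.
  destruct HQ as (_ & Htot & _ & Hodd).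
  assert (Hsplit : sumL Q (cube m) = sumL (fun u => if Nat.odd (weight u) then Q u else 0) (cube m)
    + sumL (fun u => if Nat.odd (weight u) then 0 else Q u) (cube m)).
  { rewrite <- sumL_plus. apply sumL_ext. intros u _. destruct (Nat.odd (weight u)); ring. }
  lra.
Qed.

Lemma feasible_parity_le_mean : d <= INR m * gamma.
Proof.
  rewrite <- feasible_mean_weight. destruct HQ as (Hnn & _ & _ & <-).
  apply sumL_le. intros u Hu. specialize (Hnn u Hu).
  destruct (Nat.odd (weight u)) eqn:Hodd.
  - destruct (weight u) as [|w]; [discriminate|].
    rewrite S_INR. pose proof (pos_INR w). nra.
  - pose proof (pos_INR (weight u)). nra.
Qed.

Lemma feasible_odd_support u : In u (cube m) -> Nat.odd (weight u) = true -> d = 0 -> Q u = 0.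
Proof.
  intros Hu Hw Hd. destruct HQ as (Hnn & _ & _ & Hodd).
  apply (sumL_nonneg_eq0 (fun v => if Nat.odd (weight v) then Q v else 0) (cube m))
    in Hu; [now rewrite Hw in Hu | | lra].
  intros v Hv. destruct (Nat.odd (weight v)); [now apply Hnn | lra].
Qed.

Lemma feasible_even_support u : In u (cube m) -> Nat.odd (weight u) = false -> d = 1 -> Q u = 0.
Proof.
  intros Hu Hw Hd. destruct HQ as (Hnn & _ & _ & _).
  apply (sumL_nonneg_eq0 (fun v => if Nat.odd (weight v) then 0 else Q v) (cube m))
    in Hu; [now rewrite Hw in Hu | | rewrite feasible_even_mass; lra].
  intros v Hv. destruct (Nat.odd (weight v)); [lra | now apply Hnn].
Qed.

End Feasible.

(** * Gibbs' inequality *)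

Lemma xlnx_ge_xlny q p : 0 <= q -> 0 <= p -> (p = 0 -> q = 0) ->
  q * ln p <= q * ln q + p - q.
Proof.
  intros [Hq|<-] Hp Hsupp; [|lra].
  destruct Hp as [Hp|<-]; [|specialize (Hsupp eq_refl); lra].
  (* ln (p/q) <= p/q - 1, multiplied by q *)
  pose proof (exp_ineq1_le (ln p + - ln q)) as Hexp.
  rewrite exp_plus, exp_Ropp, !exp_ln in Hexp by assumption.
  apply Rmult_le_compat_l with (r := q) in Hexp; [|lra].
  replace (q * (p * / q)) with p in Hexp by (field; lra). lra.
Qed.

Lemma sumL_gibbs P Q l :
  (forall u, In u l -> 0 <= Q u) -> (forall u, In u l -> 0 <= P u) ->
  (forall u, In u l -> P u = 0 -> Q u = 0) -> sumL P l = sumL Q l ->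
  sumL (fun u => Q u * ln (P u)) l <= sumL (fun u => Q u * ln (Q u)) l.
Proof.
  intros HQ HP Hsupp Hmass.
  apply Rle_trans with (sumL (fun u => Q u * ln (Q u) + P u + -1 * Q u) l).
  - apply sumL_le. intros u Hu.
    pose proof (xlnx_ge_xlny (Q u) (P u) (HQ u Hu) (HP u Hu) (Hsupp u Hu)). lra.
  - rewrite !sumL_plus, sumL_scal, Hmass. lra.
Qed.

(** * Generating functions of the weight *)

Lemma sumL_pow_weight x n : sumL (fun u => x ^ weight u) (cube n) = (1 + x) ^ n.
Proof.
  induction n as [|n IH]; [simpl; ring|].
  rewrite sumL_cube_S, (sumL_scal x (fun u => x ^ weight u)).
  change (sumL (fun u => x ^ weight (false :: u)) (cube n)) with
    (sumL (fun u => x ^ weight u) (cube n)).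
  rewrite IH. simpl. ring.
Qed.

Lemma sumL_nth_pow_weight x n i : (i < S n)%nat ->
  sumL (fun u => if nth i u false then x ^ weight u else 0) (cube (S n)) = x * (1 + x) ^ n.
Proof.
  revert i; induction n as [|n IH]; intros i Hi; rewrite sumL_cube_S.
  - destruct i as [|i]; [|lia]. simpl. ring.
  - destruct i as [|i]; simpl nth.
    + rewrite (sumL_scal x (fun u => x ^ weight u)), sumL_pow_weight.
      rewrite sumL_0. ring.
    + rewrite (sumL_ext (fun u => if nth i u false then x ^ weight (true :: u) else 0)
        (fun u => x * (if nth i u false then x ^ weight u else 0)))
        by (intros u _; destruct (nth i u false); [reflexivity | ring]).
      rewrite sumL_scal. simpl weight. rewrite !IH by lia. simpl. ring.
Qed.

Lemma pow_opp_weight t w : (- t) ^ w = if Nat.odd w then - t ^ w else t ^ w.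
Proof.
  induction w as [|w IH]; [reflexivity|].
  simpl pow. rewrite IH, Nat.odd_succ, <- Nat.negb_odd.
  destruct (Nat.odd w); simpl; ring.
Qed.

Definition gf_even (n : nat) (t : R) : R := ((1 + t) ^ n + (1 - t) ^ n) / 2.
Definition gf_odd (n : nat) (t : R) : R := ((1 + t) ^ n - (1 - t) ^ n) / 2.

Lemma odd_part_pow t w :
  (if Nat.odd w then t ^ w else 0) = / 2 * t ^ w + - / 2 * (- t) ^ w.
Proof. rewrite pow_opp_weight. destruct (Nat.odd w); field. Qed.

Lemma even_part_pow t w :
  (if Nat.odd w then 0 else t ^ w) = / 2 * t ^ w + / 2 * (- t) ^ w.
Proof. rewrite pow_opp_weight. destruct (Nat.odd w); field. Qed.

Lemma sumL_odd_pow_weight t n :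
  sumL (fun u => if Nat.odd (weight u) then t ^ weight u else 0) (cube n) = gf_odd n t.
Proof.
  rewrite (sumL_ext _ _ _ (fun u _ => odd_part_pow t (weight u))).
  rewrite sumL_lin, !sumL_pow_weight. unfold gf_odd, Rminus. field.
Qed.

Lemma sumL_even_pow_weight t n :
  sumL (fun u => if Nat.odd (weight u) then 0 else t ^ weight u) (cube n) = gf_even n t.
Proof.
  rewrite (sumL_ext _ _ _ (fun u _ => even_part_pow t (weight u))).
  rewrite sumL_lin, !sumL_pow_weight. unfold gf_even, Rminus. field.
Qed.

Lemma sumL_nth_odd_pow_weight t n i : (i < S n)%nat ->
  sumL (fun u => if nth i u false then
    (if Nat.odd (weight u) then t ^ weight u else 0) else 0) (cube (S n)) = t * gf_even n t.
Proof.
  intros Hi.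
  rewrite (sumL_ext _ (fun u => / 2 * (if nth i u false then t ^ weight u else 0)
    + - / 2 * (if nth i u false then (- t) ^ weight u else 0))).
  - rewrite sumL_lin, !sumL_nth_pow_weight by exact Hi. unfold gf_even, Rminus. field.
  - intros u _. destruct (nth i u false); [apply odd_part_pow | ring].
Qed.

Lemma sumL_nth_even_pow_weight t n i : (i < S n)%nat ->
  sumL (fun u => if nth i u false then
    (if Nat.odd (weight u) then 0 else t ^ weight u) else 0) (cube (S n)) = t * gf_odd n t.
Proof.
  intros Hi.
  rewrite (sumL_ext _ (fun u => / 2 * (if nth i u false then t ^ weight u else 0)
    + / 2 * (if nth i u false then (- t) ^ weight u else 0))).
  - rewrite sumL_lin, !sumL_nth_pow_weight by exact Hi. unfold gf_odd, Rminus. field.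
  - intros u _. destruct (nth i u false); [apply even_part_pow | ring].
Qed.

Fixpoint gf_odd_div (n : nat) (t : R) : R :=
  match n with
  | O => 0
  | S k => gf_odd_div k t + gf_even k t
  end.

Lemma gf_odd_factor n t : gf_odd n t = t * gf_odd_div n t.
Proof.
  induction n as [|n IH]; simpl gf_odd_div; [unfold gf_odd; simpl; field|].
  rewrite Rmult_plus_distr_l, <- IH. unfold gf_odd, gf_even. simpl. field.
Qed.

Lemma gf_even_0 n : gf_even n 0 = 1.
Proof. unfold gf_even. rewrite Rplus_0_r, Rminus_0_r, pow1. field. Qed.

Lemma gf_odd_div_0 n : gf_odd_div n 0 = INR n.
Proof.
  induction n as [|n IH]; simpl gf_odd_div; [reflexivity|].
  rewrite IH, gf_even_0, S_INR. reflexivity.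
Qed.

Lemma gf_even_1 n : gf_even (S n) 1 = 2 ^ n.
Proof.
  unfold gf_even. replace (1 + 1) with 2 by ring. rewrite Rminus_diag, pow_i by lia.
  simpl. field.
Qed.

Lemma gf_odd_1 n : gf_odd (S n) 1 = 2 ^ n.
Proof.
  unfold gf_odd. replace (1 + 1) with 2 by ring. rewrite Rminus_diag, pow_i by lia.
  simpl. field.
Qed.

Lemma continuity_gf_even n : continuity (gf_even n).
Proof. apply derivable_continuous. unfold gf_even. reg. Qed.

Lemma continuity_gf_odd n : continuity (gf_odd n).
Proof. apply derivable_continuous. unfold gf_odd. reg. Qed.

Lemma continuity_gf_odd_div n : continuity (gf_odd_div n).
Proof.
  induction n as [|n IH]; simpl.
  - apply continuity_const. now intros x y.
  - exact (continuity_plus _ _ IH (continuity_gf_even n)).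
Qed.

Section UnitInterval.
Variable t : R.
Hypothesis Ht : 0 < t <= 1.

Lemma gf_odd_le_even n : gf_odd n t <= gf_even n t.
Proof. unfold gf_odd, gf_even. assert (0 <= (1 - t) ^ n) by (apply pow_le; lra). lra. Qed.

Lemma gf_odd_pos n : 0 < gf_odd (S n) t.
Proof.
  unfold gf_odd. simpl.
  assert ((1 - t) ^ n <= (1 + t) ^ n) by (apply pow_incr; lra).
  assert (0 < (1 + t) ^ n) by (apply pow_lt; lra).
  assert (0 <= (1 - t) ^ n) by (apply pow_le; lra).
  nra.
Qed.

Lemma gf_even_pos n : 0 < gf_even n t.
Proof.
  unfold gf_even.
  assert (0 < (1 + t) ^ n) by (apply pow_lt; lra).
  assert (0 <= (1 - t) ^ n) by (apply pow_le; lra).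
  lra.
Qed.

Lemma gf_odd_div_pos n : 0 < gf_odd_div (S n) t.
Proof. pose proof (gf_odd_pos n) as HO. rewrite gf_odd_factor in HO. nra. Qed.

End UnitInterval.

(** * The tilted distribution *)

Definition tilted (m : nat) (d t : R) (u : list bool) : R :=
  (if Nat.odd (weight u) then d / gf_odd m t else (1 - d) / gf_even m t) * t ^ weight u.

Lemma tilted_split m d t u : tilted m d t u =
  d / gf_odd m t * (if Nat.odd (weight u) then t ^ weight u else 0)
  + (1 - d) / gf_even m t * (if Nat.odd (weight u) then 0 else t ^ weight u).
Proof. unfold tilted. destruct (Nat.odd (weight u)); ring. Qed.

Lemma tilted_nonneg m d t u : 0 < t <= 1 -> 0 <= d <= 1 -> 0 <= tilted (S m) d t u.
Proof.
  intros Ht Hd. pose proof (gf_odd_pos t Ht m). pose proof (gf_even_pos t Ht (S m)).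
  unfold tilted. apply Rmult_le_pos; [|apply pow_le; lra].
  destruct (Nat.odd (weight u)); apply Rle_mult_inv_pos; lra.
Qed.

Lemma sumL_tilted m d t : 0 < t <= 1 -> sumL (tilted (S m) d t) (cube (S m)) = 1.
Proof.
  intros Ht. pose proof (gf_odd_pos t Ht m). pose proof (gf_even_pos t Ht (S m)).
  rewrite (sumL_ext _ _ _ (fun u _ => tilted_split (S m) d t u)).
  rewrite sumL_lin, sumL_odd_pow_weight, sumL_even_pow_weight. field. lra.
Qed.

(* The marginal equation of the tilted distribution on F_2^(n+1), cleared of denominators and
   divided by t, so that it still carries information at t = 0. *)
Definition balance (n : nat) (gamma d t : R) : R :=
  (1 - d) * t * gf_odd n t * gf_odd_div (S n) t + d * gf_even n t * gf_even (S n) t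
  - gamma * gf_even (S n) t * gf_odd_div (S n) t.

Lemma tilted_feasible n gamma d t : 0 < t <= 1 -> 0 <= d <= 1 ->
  balance n gamma d t = 0 -> feasible (S n) gamma d (tilted (S n) d t).
Proof.
  intros Ht Hd Hbal.
  pose proof (gf_odd_pos t Ht n) as HO. pose proof (gf_even_pos t Ht (S n)) as HE.
  pose proof (gf_odd_div_pos t Ht n) as HQ.
  repeat split.
  - intros u _. now apply tilted_nonneg.
  - now apply sumL_tilted.
  - intros i Hi.
    rewrite (sumL_ext _ (fun u => d / gf_odd (S n) t * (if nth i u false then
        (if Nat.odd (weight u) then t ^ weight u else 0) else 0)
      + (1 - d) / gf_even (S n) t * (if nth i u false then
        (if Nat.odd (weight u) then 0 else t ^ weight u) else 0))).
    + rewrite sumL_lin, sumL_nth_odd_pow_weight, sumL_nth_even_pow_weight by exact Hi.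
      rewrite (gf_odd_factor (S n)) in *. unfold balance in Hbal.
      apply Rmult_eq_reg_r with (gf_odd_div (S n) t * gf_even (S n) t); [|nra].
      field_simplify; [lra | repeat split; lra].
    + intros u _. rewrite tilted_split. destruct (nth i u false); ring.
  - rewrite (sumL_ext _ (fun u => d / gf_odd (S n) t *
        (if Nat.odd (weight u) then t ^ weight u else 0))).
    + rewrite sumL_scal, sumL_odd_pow_weight. field. lra.
    + intros u _. unfold tilted. destruct (Nat.odd (weight u)); ring.
Qed.

Lemma balance_root n gamma d : (0 < n)%nat -> gamma < 1 / 2 -> d < INR (S n) * gamma ->
  exists t, 0 < t <= 1 /\ balance n gamma d t = 0.
Proof.
  intros Hn Hg Hd.
  assert (Hcont : continuity (balance n gamma d)).
  { pose proof (continuity_gf_odd n) as C1. pose proof (continuity_gf_even n) as C2.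
    pose proof (continuity_gf_even (S n)) as C3. pose proof (continuity_gf_odd_div (S n)) as C4.
    intros x. unfold balance.
    repeat first [ apply C1 | apply C2 | apply C3 | apply C4
                 | apply continuity_pt_minus | apply continuity_pt_mult
                 | apply continuity_pt_plus | apply continuity_pt_const; now intros ? ?
                 | apply derivable_continuous_pt, derivable_pt_id ]. }
  assert (H0 : balance n gamma d 0 < 0).
  { unfold balance. rewrite !gf_even_0, gf_odd_div_0. lra. }
  assert (H1 : 0 < balance n gamma d 1).
  { destruct n as [|k]; [lia|]. unfold balance.
    rewrite <- (Rmult_1_l (gf_odd_div (S (S k)) 1)), <- gf_odd_factor.
    rewrite !gf_odd_1, !gf_even_1.
    assert (0 < 2 ^ k) by (apply pow_lt; lra). simpl.
    match goal with |- 0 < ?e => replace e with (2 * 2 ^ k * 2 ^ k * (1 - 2 * gamma)) by ring end.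
    apply Rmult_lt_0_compat; [apply Rmult_lt_0_compat|]; lra. }
  destruct (IVT _ 0 1 Hcont Rlt_0_1 H0 H1) as [t [[Ht0 Ht1] Hroot]].
  exists t. split; [|exact Hroot].
  destruct Ht0 as [|<-]; lra.
Qed.

(** * The cross-entropy bound *)

Definition cross_ent (m : nat) (gamma d t : R) : R :=
  - ((1 - d) * ln ((1 - d) / gf_even m t) + d * ln (d / gf_odd m t)
     + INR m * gamma * ln t) / ln 2.

Lemma ent_xlnx m Q : ent m Q = - sumL (fun u => Q u * ln (Q u)) (cube m) / ln 2.
Proof.
  unfold ent, plogp, log2.
  rewrite (sumL_ext _ (fun u => / ln 2 * (Q u * ln (Q u)))) by (intros; unfold Rdiv; ring).
  rewrite sumL_scal. unfold Rdiv. ring.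
Qed.

Section CrossEntropy.
Variables (n : nat) (gamma d t : R) (Q : list bool -> R).
Hypotheses (Ht : 0 < t <= 1) (Hd : 0 <= d <= 1) (HQ : feasible (S n) gamma d Q).

Lemma tilted_eq0_support u : In u (cube (S n)) -> tilted (S n) d t u = 0 -> Q u = 0.
Proof.
  intros Hu Hzero. unfold tilted in Hzero.
  pose proof (pow_lt t (weight u) (proj1 Ht)).
  pose proof (gf_odd_pos t Ht n). pose proof (gf_even_pos t Ht (S n)).
  apply Rmult_integral in Hzero. destruct Hzero as [Hc|]; [|lra].
  destruct (Nat.odd (weight u)) eqn:Hw.
  - apply (feasible_odd_support _ _ _ _ HQ u Hu Hw).
    replace d with (d / gf_odd (S n) t * gf_odd (S n) t) by (field; lra).
    rewrite Hc. ring.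
  - apply (feasible_even_support _ _ _ _ HQ u Hu Hw).
    enough (1 - d = 0) by lra.
    replace (1 - d) with ((1 - d) / gf_even (S n) t * gf_even (S n) t) by (field; lra).
    rewrite Hc. ring.
Qed.

Lemma sumL_xlny_tilted :
  sumL (fun u => Q u * ln (tilted (S n) d t u)) (cube (S n)) =
  (1 - d) * ln ((1 - d) / gf_even (S n) t) + d * ln (d / gf_odd (S n) t)
  + INR (S n) * gamma * ln t.
Proof.
  rewrite (sumL_ext _ (fun u =>
      (ln (d / gf_odd (S n) t) * (if Nat.odd (weight u) then Q u else 0)
       + ln ((1 - d) / gf_even (S n) t) * (if Nat.odd (weight u) then 0 else Q u))
      + ln t * (Q u * INR (weight u)))).
  - rewrite sumL_plus, sumL_lin, sumL_scal.
    rewrite (feasible_mean_weight _ _ _ _ HQ), (feasible_even_mass _ _ _ _ HQ).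
    destruct HQ as (_ & _ & _ & ->). ring.
  - intros u Hu.
    destruct (Req_dec (tilted (S n) d t u) 0) as [Hzero|Hpos].
    + (* then d is 0 or 1 and ln 0 is a junk value, but Q u vanishes as well *)
      rewrite (tilted_eq0_support u Hu Hzero). destruct (Nat.odd (weight u)); ring.
    + assert (Htw : 0 < t ^ weight u) by (apply pow_lt; lra).
      assert (0 < tilted (S n) d t u) by (pose proof (tilted_nonneg n d t u Ht Hd); lra).
      unfold tilted in *.
      destruct (Nat.odd (weight u)); rewrite ln_mult, ln_pow by nra; ring.
Qed.

Lemma ent_le_cross_ent : ent (S n) Q <= cross_ent (S n) gamma d t.
Proof.
  pose proof HQ as (HQnn & Hmass & _).
  rewrite ent_xlnx. unfold cross_ent. apply Rmult_le_compat_r.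
  - left. apply Rinv_0_lt_compat. pose proof ln_lt_2. lra.
  - rewrite <- sumL_xlny_tilted. apply Ropp_le_contravar, sumL_gibbs; auto.
    + intros u _. now apply tilted_nonneg.
    + exact tilted_eq0_support.
    + rewrite Hmass. now apply sumL_tilted.
Qed.

End CrossEntropy.

Lemma ent_tilted n gamma d t : 0 < t <= 1 -> 0 <= d <= 1 ->
  feasible (S n) gamma d (tilted (S n) d t) ->
  ent (S n) (tilted (S n) d t) = cross_ent (S n) gamma d t.
Proof.
  intros Ht Hd Hfeas. rewrite ent_xlnx, (sumL_xlny_tilted n gamma d t _ Ht Hd Hfeas).
  reflexivity.
Qed.

Lemma xln_div x y : 0 <= x -> 0 < y -> x * ln (x / y) = x * ln x - x * ln y.
Proof.
  intros [Hx|<-] Hy; [|ring].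
  unfold Rdiv. rewrite ln_mult, ln_Rinv by (try apply Rinv_0_lt_compat; assumption). ring.
Qed.

Lemma cross_ent_sub_h m gamma d t : 0 < t <= 1 -> 0 <= d <= 1 ->
  cross_ent (S m) gamma d t - h d =
  ((1 - d) * ln (gf_even (S m) t) + d * ln (gf_odd (S m) t) - INR (S m) * gamma * ln t) / ln 2.
Proof.
  intros Ht Hd. pose proof (gf_odd_pos t Ht m). pose proof (gf_even_pos t Ht (S m)).
  pose proof ln_lt_2.
  unfold cross_ent, h, plogp, log2.
  rewrite (xln_div (1 - d)), (xln_div d) by lra. field. lra.
Qed.

Lemma cross_ent_sub_h_antitone m gamma t d1 d2 : 0 < t <= 1 -> 0 <= d1 -> d1 <= d2 -> d2 <= 1 ->
  cross_ent (S m) gamma d2 t - h d2 <= cross_ent (S m) gamma d1 t - h d1.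
Proof.
  intros Ht Hd1 H12 Hd2. rewrite !cross_ent_sub_h by lra.
  pose proof (gf_odd_pos t Ht m) as HO. pose proof (gf_odd_le_even t Ht (S m)) as HOE.
  assert (Hln : ln (gf_odd (S m) t) <= ln (gf_even (S m) t)).
  { destruct (Rle_lt_or_eq _ _ HOE) as [Hlt|Heq]; [left; now apply ln_increasing|].
    rewrite Heq. lra. }
  unfold Rdiv. apply Rmult_le_compat_r; [left; apply Rinv_0_lt_compat; pose proof ln_lt_2; lra|].
  nra.
Qed.

Lemma Hstar_is_lub m gamma d b : (exists Q, feasible m gamma d Q) ->
  (forall Q, feasible m gamma d Q -> ent m Q <= b) ->
  is_lub (entropies m gamma d) (Hstar m gamma d).
Proof.
  intros [Q HQ] Hbound. unfold Hstar. apply epsilon_spec.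
  destruct (completeness (entropies m gamma d)) as [x Hx].
  - exists b. intros x [Q' [HQ' ->]]. now apply Hbound.
  - exists (ent m Q). now exists Q.
  - now exists x.
Qed.

Lemma Hstar_le m gamma d b : (exists Q, feasible m gamma d Q) ->
  (forall Q, feasible m gamma d Q -> ent m Q <= b) -> Hstar m gamma d <= b.
Proof.
  intros Hex Hbound. apply (Hstar_is_lub m gamma d b Hex Hbound).
  intros x [Q [HQ ->]]. now apply Hbound.
Qed.

Lemma ent_le_Hstar m gamma d b Q : feasible m gamma d Q ->
  (forall Q', feasible m gamma d Q' -> ent m Q' <= b) -> ent m Q <= Hstar m gamma d.
Proof.
  intros HQ Hbound. apply (Hstar_is_lub m gamma d b (ex_intro _ Q HQ) Hbound).
  now exists Q.
Qed.

Theorem mainTheorem15 (m : nat) (gamma d1 d2 : R) :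
  (1 < m)%nat -> 0 < gamma < 1 / 2 ->
  0 <= d1 -> d1 <= d2 -> d2 <= 1 ->
  ER_le (F m gamma d2) (F m gamma d1).
Proof.
  intros Hm Hg Hd1 H12 Hd2. unfold F.
  destruct (excluded_middle_informative (exists Q, feasible m gamma d2 Q))
    as [[Q2 HQ2]|]; [|exact I].
  destruct (Rle_lt_or_eq _ _ H12) as [Hlt|<-].
  2:{ destruct (excluded_middle_informative (exists Q, feasible m gamma d1 Q));
      [simpl; lra | exfalso; eauto]. }
  destruct m as [|n]; [lia|].
  pose proof (feasible_parity_le_mean _ _ _ _ HQ2) as Hpar.
  destruct (balance_root n gamma d1) as [t [Ht Hbal]]; [lia | lra | lra |].
  assert (HQ1 := tilted_feasible n gamma d1 t Ht ltac:(lra) Hbal).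
  destruct (excluded_middle_informative (exists Q, feasible (S n) gamma d1 Q));
    [simpl | exfalso; eauto].
  assert (Hbound : forall d, 0 <= d <= 1 -> forall Q, feasible (S n) gamma d Q ->
    ent (S n) Q <= cross_ent (S n) gamma d t) by (intros; now apply ent_le_cross_ent).
  pose proof (Hstar_le _ _ _ _ (ex_intro _ Q2 HQ2) (Hbound d2 ltac:(lra))) as Hup.
  pose proof (ent_le_Hstar _ _ _ _ _ HQ1 (Hbound d1 ltac:(lra))) as Hlow.
  rewrite (ent_tilted n gamma) in Hlow by (assumption || lra).
  pose proof (cross_ent_sub_h_antitone n gamma t d1 d2 Ht Hd1 H12 Hd2).
  lra.
Qed.
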